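(* Let $f:A\to B$ be a ring homomorphism, $\mathfrak b$ an ideal of $B$, and $A\bowtie^f\mathfrak b:=\{(a,f(a)+b): a\in A,\ b\in\mathfrak b\}\subseteq A\times B$. (1) If $A\bowtie^f\mathfrak b$ is a coherent ring, then $A$ is a coherent ring. (2) If $A$ is a coherent ring and $\mathfrak b$ is a coherent $A$-module (with the structure induced by $f$, $a\cdot x=f(a)x$), then $A\bowtie^f\mathfrak b$ is a coherent ring.
   Context: All rings are commutative with identity. A module $M$ over a ring $R$ is coherent if it is finitely generated and every finitely generated submodule of $M$ is finitely presented; a ring $R$ is coherent if it is coherent as a module over itself (every finitely generated ideal is finitely presented). *)

From HB Require Import structures.
From mathcomp Require Import all_boot all_order all_algebra.
Set Implicit Arguments. Unset Strict Implicit. Unset Printing Implicit Defensive.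
Import Order.TTheory GRing.Theory.
Local Open Scope ring_scope.

(* Modules are handled concretely: the scalars form a subring of a commutative
   ring R, given by a predicate K (K = fun _ => True for R itself); the module
   elements live in a Z-module V with scalar action act : R -> V -> V, and a
   module is a predicate M on V.  This lets us treat both ideals of a ring over
   itself, the A-module b (a.x = f a * x), and the subring A ⋈^f b of A x B. *)

Section ModuleNotions.
Variables (R : comPzRingType) (K : R -> Prop) (V : zmodType) (act : R -> V -> V).

Definition span (n : nat) (s : 'I_n -> V) : V -> Prop :=
  fun x => exists c : 'I_n -> R, (forall i, K (c i)) /\ x = \sum_(i < n) act (c i) (s i).

Definition is_submodule (N : V -> Prop) : Prop :=
  [/\ N 0, (forall x y, N x -> N y -> N (x + y)), (forall x, N x -> N (- x))
    & (forall r x, K r -> N x -> N (act r x))].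

Definition fin_gen (N : V -> Prop) : Prop :=
  exists n (s : 'I_n -> V), forall x, N x <-> span s x.

End ModuleNotions.

Definition relations (R : comPzRingType) (K : R -> Prop) (V : zmodType)
  (act : R -> V -> V) (n : nat) (s : 'I_n -> V) : 'rV[R]_n -> Prop :=
  fun c => (forall i, K (c 0 i)) /\ \sum_(i < n) act (c 0 i) (s i) = 0.

Definition fin_pres (R : comPzRingType) (K : R -> Prop) (V : zmodType)
  (act : R -> V -> V) (N : V -> Prop) : Prop :=
  exists n (s : 'I_n -> V), (forall x, N x <-> span K act s x) /\
    fin_gen K (fun (r : R) (v : 'rV[R]_n) => r *: v) (relations K act s).

Definition coherent_module (R : comPzRingType) (K : R -> Prop) (V : zmodType)
  (act : R -> V -> V) (M : V -> Prop) : Prop :=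
  fin_gen K act M /\
  forall N : V -> Prop, (forall x, N x -> M x) -> is_submodule K act N ->
    fin_gen K act N -> fin_pres K act N.

Definition coherent_subring (R : comPzRingType) (K : R -> Prop) : Prop :=
  coherent_module K (fun x y : R => x * y) K.

Definition coherent_ring (R : comPzRingType) : Prop :=
  coherent_subring (fun _ : R => True).

Definition is_ideal (B : comPzRingType) (b : B -> Prop) : Prop :=
  [/\ b 0, (forall x y, b x -> b y -> b (x + y)), (forall x, b x -> b (- x))
    & (forall r x, b x -> b (r * x))].

Definition amalgamation (A B : comPzRingType) (f : {rmorphism A -> B})
  (b : B -> Prop) : A * B -> Prop :=
  fun p => exists a x, b x /\ p = (a, f a + x).

(* (1) a |-> (a, f a) and the first projection make A a retract of A ⋈^f b:
   an A-relation among s_1, ..., s_n is the projection of the relation it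
   induces among the (s_i, f s_i), so coherence descends to A.
   (2) As an A-module, A ⋈^f b is generated by 1 and the (0, y) for y among
   generators of b.  Writing a relation r among s_1, ..., s_n over A ⋈^f b as
   r_j = sum_i (c_ij, f c_ij) z_i turns it into an A-relation c among the
   products z_i s_j, so it is enough that every finite family
   t_j = (a_j, f a_j + x_j) (x_j in b) has finitely generated A-relations:
   solve sum_j c_j a_j = 0 by coherence of A, then sum_j f(c_j) x_j = 0 by
   coherence of b.  Modules of relations are handled as row spaces of
   matrices; that their finite generation does not depend on the generating
   family is Schanuel's lemma in matrix form. *)

From Pilot Require Import Defs.
From HB Require Import structures.
From mathcomp Require Import all_boot all_order all_algebra.
From mathcomp Require Import ring.
Import Defs. (* vector.v shadows Defs.span *)
Import GRing.Theory.
Local Open Scope ring_scope.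
Set Implicit Arguments. Unset Strict Implicit. Unset Printing Implicit Defensive.

Record is_subring (R : comPzRingType) (K : R -> Prop) : Prop := IsSubring {
  subring0 : K 0;
  subring1 : K 1;
  subringD : forall x y, K x -> K y -> K (x + y);
  subringN : forall x, K x -> K (- x);
  subringM : forall x y, K x -> K y -> K (x * y) }.

Record is_action (R : comPzRingType) (V : zmodType) (act : R -> V -> V) : Prop :=
  IsAction {
  actDr : forall r, {morph act r : x y / x + y};
  actDl : forall x, {morph act^~ x : r s / r + s};
  actA : forall r s x, act (r * s) x = act r (act s x);
  act1 : forall x, act 1 x = x }.

Definition lincomb (R : comPzRingType) (V : zmodType) (act : R -> V -> V) n
    (s : 'I_n -> V) (c : 'rV[R]_n) : V :=
  \sum_i act (c 0 i) (s i).

Definition mx_over (R : comPzRingType) (K : R -> Prop) m n (M : 'M[R]_(m, n)) :=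
  forall i j, K (M i j).

Definition row_span (R : comPzRingType) (K : R -> Prop) q n (M : 'M[R]_(q, n))
    (x : 'rV[R]_n) :=
  exists2 c : 'rV_q, mx_over K c & x = c *m M.

Lemma is_subring_True (R : comPzRingType) : is_subring (fun _ : R => True).
Proof. by []. Qed.

Lemma rmorph_mul_action (A R : comPzRingType) (phi : {rmorphism A -> R}) :
  is_action (fun a (x : R) => phi a * x).
Proof.
split=> [a x y | x a a' | a a' x | x]; first exact: mulrDr.
- by rewrite rmorphD mulrDl.
- by rewrite rmorphM mulrA.
- by rewrite rmorph1 mul1r.
Qed.

Lemma mul_action (R : comPzRingType) : is_action (fun x y : R => x * y).
Proof. exact: (rmorph_mul_action idfun). Qed.

Section SubringMatrices.
Variables (R : comPzRingType) (K : R -> Prop).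
Hypothesis hK : is_subring K.

Lemma subring_sum (I : finType) (F : I -> R) : (forall i, K (F i)) -> K (\sum_i F i).
Proof. by move=> FK; apply: big_ind => //; [exact: subring0 | exact: subringD]. Qed.

Lemma mx_over_add m n (M N : 'M[R]_(m, n)) :
  mx_over K M -> mx_over K N -> mx_over K (M + N).
Proof. by move=> MK NK i j; rewrite mxE; apply: subringD. Qed.

Lemma mx_over_opp m n (M : 'M[R]_(m, n)) : mx_over K M -> mx_over K (- M).
Proof. by move=> MK i j; rewrite mxE; apply: subringN. Qed.

Lemma mx_over_mul m n p (M : 'M[R]_(m, n)) (N : 'M[R]_(n, p)) :
  mx_over K M -> mx_over K N -> mx_over K (M *m N).
Proof.
by move=> MK NK i j; rewrite mxE; apply: subring_sum => k; apply: subringM.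
Qed.

Lemma mx_over1 n : mx_over K (1%:M : 'M[R]_n).
Proof.
by move=> i j; rewrite mxE; case: (i == j); [exact: subring1 | exact: subring0].
Qed.

Lemma mx_over_row_mxP m n1 n2 (M : 'M[R]_(m, n1)) (N : 'M[R]_(m, n2)) :
  mx_over K (row_mx M N) <-> mx_over K M /\ mx_over K N.
Proof.
split=> [MNK | [MK NK] i j].
  by split=> i j; [rewrite -(row_mxEl M N) | rewrite -(row_mxEr M N)].
by rewrite mxE; case: splitP.
Qed.

Lemma row_span_row q n (M : 'M[R]_(q, n)) k : row_span K M (row k M).
Proof.
exists (delta_mx 0 k); last exact: rowE.
by move=> i j; rewrite mxE; case: (_ && _); [exact: subring1 | exact: subring0].
Qed.

Lemma fin_gen_subring_self : fin_gen K (fun x y : R => x * y) K.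
Proof.
exists 1%N, (fun _ => 1) => x; split=> [xK | [c [cK ->]]].
  by exists (fun _ => x); rewrite big_ord1 mulr1.
by apply: subring_sum => i; rewrite mulr1.
Qed.

End SubringMatrices.

Section LinearCombinations.
Variables (R : comPzRingType) (V : zmodType) (act : R -> V -> V).
Hypothesis hact : is_action act.

Lemma act0r x : act 0 x = 0.
Proof. by apply: (addrI (act 0 x)); rewrite -(actDl hact) !addr0. Qed.

Lemma actr0 r : act r 0 = 0.
Proof. by apply: (addrI (act r 0)); rewrite -(actDr hact) !addr0. Qed.

Lemma actNl r x : act (- r) x = - act r x.
Proof. by apply: (addrI (act r x)); rewrite -(actDl hact) !subrr act0r. Qed.

Lemma act_sumr r n (F : 'I_n -> V) : act r (\sum_i F i) = \sum_i act r (F i).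
Proof. exact: (big_morph _ (actDr hact r) (actr0 r)). Qed.

Lemma act_suml x n (F : 'I_n -> R) : act (\sum_i F i) x = \sum_i act (F i) x.
Proof. exact: (big_morph (act^~ x) (actDl hact x) (act0r x)). Qed.

Lemma lincomb0 n (s : 'I_n -> V) : lincomb act s 0 = 0.
Proof. by rewrite /lincomb big1 // => i _; rewrite mxE act0r. Qed.

Lemma lincombD n (s : 'I_n -> V) c d :
  lincomb act s (c + d) = lincomb act s c + lincomb act s d.
Proof.
by rewrite /lincomb -big_split; apply: eq_bigr => i _; rewrite mxE (actDl hact).
Qed.

Lemma lincombN n (s : 'I_n -> V) c : lincomb act s (- c) = - lincomb act s c.
Proof. by rewrite /lincomb -sumrN; apply: eq_bigr => i _; rewrite mxE actNl. Qed.

Lemma lincombB n (s : 'I_n -> V) c d :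
  lincomb act s (c - d) = lincomb act s c - lincomb act s d.
Proof. by rewrite lincombD lincombN. Qed.

Lemma lincombZ n (s : 'I_n -> V) r c : lincomb act s (r *: c) = act r (lincomb act s c).
Proof. by rewrite act_sumr; apply: eq_bigr => i _; rewrite mxE (actA hact). Qed.

Lemma lincomb_delta n (s : 'I_n -> V) i : lincomb act s (delta_mx 0 i) = s i.
Proof.
rewrite /lincomb (bigD1 i) //= mxE !eqxx (act1 hact) big1 ?addr0 // => j ji.
by rewrite mxE (negbTE ji) andbF act0r.
Qed.

Lemma lincomb_mulmx n p (s : 'I_n -> V) (c : 'rV[R]_p) (M : 'M[R]_(p, n)) :
  lincomb act s (c *m M) = lincomb act (fun k => lincomb act s (row k M)) c.
Proof.
rewrite /lincomb (eq_bigr (fun i => \sum_k act (c 0 k) (act (M k i) (s i)))).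
  rewrite exchange_big /=; apply: eq_bigr => k _.
  by rewrite act_sumr; apply: eq_bigr => i _; rewrite mxE.
by move=> i _; rewrite mxE act_suml; apply: eq_bigr => k _; rewrite (actA hact).
Qed.

End LinearCombinations.

Section Spans.
Variables (R : comPzRingType) (K : R -> Prop) (V : zmodType) (act : R -> V -> V).

Lemma spanP n (s : 'I_n -> V) x :
  span K act s x <-> exists2 c : 'rV_n, mx_over K c & x = lincomb act s c.
Proof.
split=> [[c [cK ->]] | [c cK ->]].
  exists (\row_i c i) => [i j|]; first by rewrite mxE.
  by apply: eq_bigr => i _; rewrite mxE.
by exists (fun i => c 0 i).
Qed.

Lemma relationsP n (s : 'I_n -> V) c :
  relations K act s c <-> mx_over K c /\ lincomb act s c = 0.
Proof. by split=> [[cK c0] | [cK c0]]; split=> // i; rewrite (ord1 i). Qed.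

Hypotheses (hK : is_subring K) (hact : is_action act).

Lemma span_submodule n (s : 'I_n -> V) : is_submodule K act (span K act s).
Proof.
split=> [|x y|x|r x rK]; rewrite ?spanP.
- by exists 0; [move=> i j; rewrite mxE; exact: subring0 | rewrite lincomb0].
- move=> [c cK ->] [d dK ->]; exists (c + d); first exact: mx_over_add.
  by rewrite lincombD.
- by move=> [c cK ->]; exists (- c); [exact: mx_over_opp | rewrite lincombN].
- move=> [c cK ->]; exists (r *: c); last by rewrite lincombZ.
  by move=> i j; rewrite mxE; apply: subringM.
Qed.

End Spans.

Lemma fin_gen_row_spanP (R : comPzRingType) (K : R -> Prop) n (P : 'rV[R]_n -> Prop) :
  fin_gen K (fun r (v : 'rV[R]_n) => r *: v) P <->
  exists q (M : 'M[R]_(q, n)), forall x, P x <-> row_span K M x.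
Proof.
have spanE q (s : 'I_q -> 'rV[R]_n) x :
    span K (fun r (v : 'rV[R]_n) => r *: v) s x <-> row_span K (\matrix_k s k) x.
  rewrite spanP /lincomb; split=> -[c cK ->]; exists c; rewrite // mulmx_sum_row;
    by apply: eq_bigr => k _; rewrite rowK.
split=> [[q [s Ps]] | [q [M PM]]].
  by exists q, (\matrix_k s k) => x; rewrite Ps spanE.
exists q, (fun k => row k M) => x; rewrite PM spanE.
by rewrite (_ : \matrix_k row k M = M) //; apply/row_matrixP => k; rewrite rowK.
Qed.

Section Relations.
Variables (R : comPzRingType) (K : R -> Prop) (V : zmodType) (act : R -> V -> V).
Hypotheses (hK : is_subring K) (hact : is_action act).
Local Notation rscale n := (fun r (v : 'rV[R]_n) => r *: v).

Lemma span_mem n (s : 'I_n -> V) i : span K act s (s i).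
Proof.
apply/spanP; exists (delta_mx 0 i); last by rewrite lincomb_delta.
by move=> j k; rewrite mxE; case: (_ && _); [exact: subring1 | exact: subring0].
Qed.

Lemma span_min n (s : 'I_n -> V) (N : V -> Prop) :
  is_submodule K act N -> (forall i, N (s i)) -> forall x, span K act s x -> N x.
Proof.
move=> [N0 ND _ NZ] Ns x [c [cK ->]].
by apply: big_ind => // i _; apply: NZ.
Qed.

Lemma span_coef_mx n m (s : 'I_n -> V) (t : 'I_m -> V) :
  (forall i, span K act t (s i)) ->
  exists2 M : 'M[R]_(n, m), mx_over K M & forall i, s i = lincomb act t (row i M).
Proof.
move=> st; have /fin_all_exists[c cP] i :
    exists c : 'rV_m, mx_over K c /\ s i = lincomb act t c.
  by have [c ? ?] := proj1 (spanP K act t (s i)) (st i); exists c.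
have rowM i : row i (\matrix_(k, j) c k 0 j) = c i by apply/rowP => j; rewrite !mxE.
exists (\matrix_(k, j) c k 0 j) => [i j | i]; last by rewrite rowM; case: (cP i).
by rewrite mxE; case: (cP i) => + _; apply.
Qed.

(* If s = al s' and s' = be s, the relations of s are generated by the
   relations of s' multiplied by be and by the rows of 1 - al be. *)
Lemma relations_fin_gen_span_eq n n' (s : 'I_n -> V) (s' : 'I_n' -> V) :
  (forall x, span K act s x <-> span K act s' x) ->
  fin_gen K (rscale n') (relations K act s') -> fin_gen K (rscale n) (relations K act s).
Proof.
move=> ss' /fin_gen_row_spanP[q [G relG]].
have [al alK s_al] := span_coef_mx (fun i => proj1 (ss' (s i)) (span_mem s i)).
have [be beK s'_be] := span_coef_mx (fun j => proj2 (ss' (s' j)) (span_mem s' j)).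
have lincomb_al c : lincomb act s' (c *m al) = lincomb act s c.
  by rewrite lincomb_mulmx //; apply: eq_bigr => i _; rewrite -s_al.
have lincomb_be c : lincomb act s (c *m be) = lincomb act s' c.
  by rewrite lincomb_mulmx //; apply: eq_bigr => j _; rewrite -s'_be.
apply/fin_gen_row_spanP; exists (q + n)%N, (col_mx (G *m be) (1%:M - al *m be)).
move=> x; rewrite relationsP; split=> [[xK x0] | [e eK ->]].
  have /relG[d dK xal] : relations K act s' (x *m al).
    by apply/relationsP; rewrite lincomb_al; split=> //; apply: mx_over_mul.
  exists (row_mx d x); first exact/(mx_over_row_mxP K).
  by rewrite mul_row_col mulmxA -xal mulmxBr mulmx1 mulmxA addrC subrK.
rewrite -[e]hsubmxK in eK *; case/mx_over_row_mxP: eK => dK cK.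
have /relG/relationsP[dGK dG0] : row_span K G (lsubmx e *m G) by exists (lsubmx e).
rewrite mul_row_col mulmxA; split.
  apply: (mx_over_add hK); apply: (mx_over_mul hK) => //.
  exact/(mx_over_add hK)/(mx_over_opp hK)/(mx_over_mul hK)/beK/alK/(mx_over1 hK).
by rewrite lincombD // lincomb_be dG0 add0r mulmxBr mulmx1 lincombB //
  mulmxA lincomb_be lincomb_al subrr.
Qed.

Lemma coherent_relations_fin_gen (M : V -> Prop) n (s : 'I_n -> V) :
  coherent_module K act M -> (forall i, M (s i)) ->
  fin_gen K (rscale n) (relations K act s).
Proof.
move=> [[n0 [s0 M_s0]] cohM] Ms.
have span_s_M x : span K act s x -> M x.
  move=> /(span_min (span_submodule hK hact s0)) s0x; apply/M_s0/s0x => i.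
  exact/M_s0.
have [|n' [s' [ss' relfg]]] := cohM _ span_s_M (span_submodule hK hact s).
  by exists n, s.
exact: relations_fin_gen_span_eq ss' relfg.
Qed.

Lemma relations_row_span q n (s : 'I_n -> V) (M : 'M[R]_(q, n)) :
  mx_over K M -> (forall k, lincomb act s (row k M) = 0) ->
  forall x, row_span K M x -> relations K act s x.
Proof.
move=> MK M0 x [e eK ->]; apply/relationsP; split; first exact: mx_over_mul.
by rewrite lincomb_mulmx //; apply: big1 => k _; rewrite M0 actr0.
Qed.

End Relations.

Section Retract.
Variables (A R : comPzRingType) (K : R -> Prop).
Variables (phi : {rmorphism A -> R}) (pi : {rmorphism R -> A}).
Hypotheses (hK : is_subring K) (K_phi : forall a, K (phi a)) (phiK : cancel phi pi).

Lemma coherent_ring_retract : coherent_subring K -> coherent_ring A.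
Proof.
move=> cohK; split; first exact: fin_gen_subring_self.
move=> N _ _ [n [s Ns]]; exists n, s; split=> //.
have /fin_gen_row_spanP[q [G relG]] :=
  coherent_relations_fin_gen hK (mul_action R) cohK (s := phi \o s) (fun i => K_phi (s i)).
have lincomb_pi c : lincomb *%R s (map_mx pi c) = pi (lincomb *%R (phi \o s) c).
  by rewrite /lincomb rmorph_sum; apply: eq_bigr => i _; rewrite mxE rmorphM /= phiK.
apply/fin_gen_row_spanP; exists q, (map_mx pi G) => c; split.
  move=> /relationsP[_ c0].
  have /relG[e eK ce] : relations K *%R (phi \o s) (map_mx phi c).
    apply/relationsP; split; first by move=> i j; rewrite mxE.
    rewrite -(rmorph0 phi) -c0 /lincomb rmorph_sum.
    by apply: eq_bigr => i _; rewrite mxE /= rmorphM.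
  exists (map_mx pi e) => //; rewrite -map_mxM -ce.
  by apply/matrixP => i j; rewrite !mxE phiK.
move=> rs; apply: (relations_row_span (is_subring_True A) (mul_action A) _ _ rs) => // k.
have /relG/relationsP[_ Gk0] := row_span_row hK G k.
by rewrite -map_row lincomb_pi Gk0 rmorph0.
Qed.

End Retract.

Section ModuleFinite.
Variables (A R : comPzRingType) (K : R -> Prop) (phi : {rmorphism A -> R}).
Variables (m : nat) (z : 'I_m -> R).
Local Notation phiact := (fun a (y : R) => phi a * y).

(* A relation r among s_1, ..., s_n with r_j = sum_i phi(c_ij) z_i is an
   A-relation c among the products z_i s_j, indexed by mxvec_index i j. *)
Definition zprod n (s : 'I_n -> R) (k : 'I_(m * n)) : R :=
  mxvec (\matrix_(i, j) (z i * s j)) 0 k.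

Definition zcomb n (c : 'rV[A]_(m * n)) : 'rV[R]_n :=
  \row_j \sum_i z i * phi (vec_mx c i j).

Lemma lincomb_zprod n (s : 'I_n -> R) c :
  lincomb phiact (zprod s) c = lincomb *%R s (zcomb c).
Proof.
rewrite /lincomb -{1}(vec_mxK c) (reindex _ (curry_mxvec_bij _ _)) /=.
rewrite (eq_bigr (fun p => phi (vec_mx c p.1 p.2) * (z p.1 * s p.2))); last first.
  by move=> [i j] _; rewrite /zprod !mxvecE mxE.
rewrite -(pair_bigA _ (fun i j => phi (vec_mx c i j) * (z i * s j))) exchange_big.
apply: eq_bigr => j _; rewrite mxE mulr_suml.
by apply: eq_bigr => i _; rewrite mulrCA mulrA.
Qed.

Lemma zcomb_mulmx n q (e : 'rV[A]_q) (G : 'M[A]_(q, m * n)) :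
  zcomb (e *m G) = map_mx phi e *m \matrix_k zcomb (row k G).
Proof.
apply/rowP => j; rewrite !mxE.
rewrite (eq_bigr (fun i => \sum_k phi (e 0 k) * (z i * phi (G k (mxvec_index i j))))).
  rewrite exchange_big; apply: eq_bigr => k _; rewrite !mxE mulr_sumr.
  by apply: eq_bigr => i _; rewrite !mxE.
move=> i _; rewrite !mxE rmorph_sum mulr_sumr; apply: eq_bigr => k _.
by rewrite rmorphM mulrCA.
Qed.

Hypotheses (hK : is_subring K) (K_phi : forall a, K (phi a)) (K_z : forall i, K (z i)).

Lemma mx_over_zcomb n (c : 'rV[A]_(m * n)) : mx_over K (zcomb c).
Proof.
by move=> i j; rewrite mxE; apply: (subring_sum hK) => k; apply: (subringM hK).
Qed.

Hypothesis K_span : forall x, K x -> span (fun _ => True) phiact z x.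

Lemma zcomb_onto n (c : 'rV[R]_n) : mx_over K c -> exists g, c = zcomb g.
Proof.
move=> cK; have /fin_all_exists[d cd] j :
    exists d : 'I_m -> A, c 0 j = \sum_i phi (d i) * z i.
  by have [d [_ ->]] := K_span (cK 0 j); exists d.
exists (mxvec (\matrix_(i, j) d j i)); apply/rowP => j; rewrite cd mxE.
by apply: eq_bigr => i _; rewrite mxvecK mxE mulrC.
Qed.

Hypothesis K_relations : forall N (t : 'I_N -> R), (forall k, K (t k)) ->
  fin_gen (fun _ : A => True) (fun a (v : 'rV[A]_N) => a *: v)
    (relations (fun _ => True) phiact t).

Lemma coherent_subring_module_finite : coherent_subring K.
Proof.
split=> [|N NK _ [n [s Ns]]]; first exact: fin_gen_subring_self.
exists n, s; split=> //.
have zprodK k : K (zprod s k).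
  case/mxvec_indexP: k => i j; rewrite /zprod mxvecE mxE.
  by apply: (subringM hK) => //; apply/NK/Ns/(span_mem hK (mul_action R)).
have /fin_gen_row_spanP[q [G relG]] := K_relations zprodK.
apply/fin_gen_row_spanP; exists q, (\matrix_k zcomb (row k G)) => c; split.
  move=> /relationsP[/zcomb_onto[g ->] g0].
  have /relG[e _ ->] : relations (fun _ => True) phiact (zprod s) g.
    by apply/relationsP; rewrite lincomb_zprod.
  by exists (map_mx phi e); [move=> i j; rewrite mxE | rewrite zcomb_mulmx].
apply: (relations_row_span hK (mul_action R)) => [i j | k].
  by rewrite mxE; apply: mx_over_zcomb.
have /relG/relationsP[_ Gk0] := row_span_row (is_subring_True A) G k.
by rewrite rowK -lincomb_zprod.
Qed.

End ModuleFinite.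

Section Amalgamation.
Variables (A B : comPzRingType) (f : {rmorphism A -> B}) (b : B -> Prop).
Hypothesis hb : is_ideal b.
Local Notation S := (amalgamation f b).
Local Notation fact := (fun a (x : B) => f a * x).

Definition amalg_incl (a : A) : A * B := (a, f a).

Fact amalg_incl_is_nmod_morphism : nmod_morphism amalg_incl.
Proof. by split=> [|x y]; rewrite /amalg_incl ?rmorph0 ?rmorphD. Qed.

Fact amalg_incl_is_monoid_morphism : monoid_morphism amalg_incl.
Proof. by split=> [|x y]; rewrite /amalg_incl ?rmorph1 ?rmorphM. Qed.

HB.instance Definition _ :=
  GRing.isNmodMorphism.Build A (A * B)%type amalg_incl amalg_incl_is_nmod_morphism.
HB.instance Definition _ :=
  GRing.isMonoidMorphism.Build A (A * B)%type amalg_incl amalg_incl_is_monoid_morphism.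

Local Notation amalg_act := (fun a (p : A * B) => amalg_incl a * p).

Lemma amalg_inclK : cancel amalg_incl fst.
Proof. by []. Qed.

Lemma amalgamationP p : S p <-> b (p.2 - f p.1).
Proof.
split=> [[a [x [bx ->]]] | bp]; first by rewrite /= addrAC subrr add0r.
by exists p.1, (p.2 - f p.1); split=> //; rewrite addrC subrK -surjective_pairing.
Qed.

Lemma amalgamation_incl a : S (amalg_incl a).
Proof. by apply/amalgamationP; rewrite subrr; case: hb. Qed.

Lemma amalgamation_subring : is_subring S.
Proof.
have [b0 bD bN bM] := hb.
split=> [||p q|p|p q]; rewrite ?amalgamationP /=.
- by rewrite rmorph0 subrr.
- by rewrite rmorph1 subrr.
- move=> bp bq; rewrite rmorphD.
  have -> : p.2 + q.2 - (f p.1 + f q.1) = (p.2 - f p.1) + (q.2 - f q.1) by ring.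
  exact: bD.
- move=> bp; rewrite rmorphN.
  have -> : - p.2 - - f p.1 = - (p.2 - f p.1) by ring.
  exact: bN.
- move=> bp bq; rewrite rmorphM.
  have -> : p.2 * q.2 - f p.1 * f q.1 = p.2 * (q.2 - f q.1) + f q.1 * (p.2 - f p.1).
    by ring.
  by apply: bD; apply: bM.
Qed.

Lemma ideal_lincomb n (x : 'I_n -> B) c : (forall j, b (x j)) -> b (lincomb fact x c).
Proof.
have [b0 bD _ bM] := hb.
by move=> bx; apply: big_ind => // j _; apply: bM.
Qed.

Lemma amalgamation_relationsP N (t : 'I_N -> A * B) c :
  relations (fun _ => True) amalg_act t c <->
  lincomb *%R (fun j => (t j).1) c = 0 /\
  lincomb fact (fun j => (t j).2 - f (t j).1) c = 0.
Proof.
set a := fun j => (t j).1; set x := fun j => (t j).2 - _.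
rewrite relationsP; have -> : lincomb amalg_act t c =
    (lincomb *%R a c, f (lincomb *%R a c) + lincomb fact x c).
  rewrite [LHS]surjective_pairing /lincomb raddf_sum [in X in (_, X)]raddf_sum.
  congr (_, _); rewrite rmorph_sum -big_split; apply: eq_bigr => j _ /=.
  by rewrite rmorphM /x; ring.
split=> [[_ /eqP] | [-> ->]]; last by rewrite rmorph0 addr0.
by rewrite xpair_eqE => /andP[/eqP a0 /eqP]; rewrite a0 rmorph0 add0r.
Qed.

Lemma amalgamation_relations_fin_gen :
  coherent_ring A -> coherent_module (fun _ => True) fact b ->
  forall N (t : 'I_N -> A * B), (forall k, S (t k)) ->
  fin_gen (fun _ => True) (fun a (v : 'rV[A]_N) => a *: v)
    (relations (fun _ => True) amalg_act t).
Proof.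
move=> cohA cohb N t St.
pose a j := (t j).1; pose x j := (t j).2 - f (t j).1.
have bx j : b (x j) by apply/amalgamationP.
have /fin_gen_row_spanP[q [G relG]] :=
  coherent_relations_fin_gen (is_subring_True A) (mul_action A) cohA (s := a) (fun _ => I).
pose w k := lincomb fact x (row k G).
have /fin_gen_row_spanP[p [H relH]] := coherent_relations_fin_gen (is_subring_True A)
  (rmorph_mul_action f) cohb (s := w) (fun k => ideal_lincomb _ bx).
have lincomb_w d : lincomb fact x (d *m G) = lincomb fact w d.
  by rewrite (lincomb_mulmx (rmorph_mul_action f)).
apply/fin_gen_row_spanP; exists p, (H *m G) => c; rewrite amalgamation_relationsP; split.
  move=> [ca cx].
  have /relG[d _ cd] : relations (fun _ => True) *%R a c by apply/relationsP.
  move: cx; rewrite cd lincomb_w => dw.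
  have /relH[e _ ->] : relations (fun _ => True) fact w d by apply/relationsP.
  by exists e; rewrite // mulmxA.
move=> [e _ ->]; rewrite mulmxA.
have /relH/relationsP[_ eH0] : row_span (fun _ => True) H (e *m H) by exists e.
have /relG/relationsP[_ eHG0] : row_span (fun _ => True) G (e *m H *m G) by exists (e *m H).
by rewrite lincomb_w.
Qed.

Section Generators.
Variables (p : nat) (y : 'I_p -> B).
Hypothesis b_y : forall x, b x <-> span (fun _ => True) fact y x.

Definition amalg_gen (o : 'I_p.+1) : A * B :=
  if unlift ord0 o is Some l then (0, y l) else 1.

Lemma amalgamation_gen o : S (amalg_gen o).
Proof.
rewrite /amalg_gen; case: unlift => [l|]; last exact: (subring1 amalgamation_subring).
apply/amalgamationP; rewrite /= rmorph0 subr0.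
exact/b_y/(span_mem (is_subring_True A) (rmorph_mul_action f)).
Qed.

Lemma amalgamation_span_gen u :
  S u -> span (fun _ => True) amalg_act amalg_gen u.
Proof.
move=> /amalgamationP/b_y[d [_ ud]].
exists (fun o => if unlift ord0 o is Some l then d l else u.1); split=> //.
rewrite big_ord_recl /amalg_gen unlift_none mulr1.
rewrite (eq_bigr (fun l => amalg_incl (d l) * (0, y l))) => [|l _]; last by rewrite liftK.
rewrite [LHS]surjective_pairing [RHS]surjective_pairing /= !raddf_sum /=.
rewrite -ud big1 ?addr0 => [|l _]; last exact: mulr0.
by rewrite addrC subrK.
Qed.

End Generators.

End Amalgamation.

Unset Implicit Arguments.
Set Strict Implicit.

Theorem proposition4p14 (A B : comPzRingType) (f : {rmorphism A -> B})
  (b : B -> Prop) (hb : is_ideal b) :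
  (coherent_subring (amalgamation f b) -> coherent_ring A) /\
  (coherent_ring A ->
   coherent_module (fun _ : A => True) (fun (a : A) (x : B) => f a * x) b ->
   coherent_subring (amalgamation f b)).
Proof.
split=> [|cohA cohb].
  exact: coherent_ring_retract (amalgamation_subring f hb) (amalgamation_incl f hb)
    (amalg_inclK f).
have [[p [y b_y]] _] := cohb.
exact: coherent_subring_module_finite (amalgamation_subring f hb)
  (amalgamation_incl f hb) (amalgamation_gen hb b_y) (amalgamation_span_gen b_y)
  (amalgamation_relations_fin_gen hb cohA cohb).
Qed.
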